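(* Let $n,d,c\in\mathbb{N}$ with $d\ge 50$ and $c\in[d]$, let $\mathcal{F}\subseteq 2^{[n]}$ be a hereditary family with $\delta(\mathcal{F})\ge 2^{d-1}-c+1$, and let $P$ be an isolated pile of $\mathcal{F}$ with $\sum_{x\in P}\omega_{\mathcal{F}}(x)<2^d-c$. Let $u\ge 1$ be the number of good vertices in $P$. Then every $N\in\mathcal{N}$ satisfies $|N|\le f_u$.
   Context: A family is hereditary if it is closed under taking subsets. $d_{\mathcal{F}}(x)=|\{F\in\mathcal{F}:x\in F\}|$, $\delta(\mathcal{F})=\min_x d_{\mathcal{F}}(x)$, $N(x)=\bigcup_{x\in F\in\mathcal{F}}F$. The weight of $x$ is $\omega_{\mathcal{F}}(x)=\sum_{x\in F\in\mathcal{F}}\frac{1}{|F|}$. A vertex $x$ is good if $|N(x)|\ge d+1$ and bad if $|N(x)|=d$. A set $P\subseteq[n]$ with $|P|=d$ is a pile of $\mathcal{F}$ if $P\subseteq N(y)$ for every $y\in P$, and there exists $z\in P$ with $N(z)=P$; a pile is isolated if it is disjoint from every other pile. Given the pile $P$, let $\mathcal{G}=\{S\subseteq P: S\in\mathcal{F}\}$, $\mathcal{M}=2^{P}\setminus\mathcal{G}$, and $\mathcal{N}=\{P\setminus M: M\in\mathcal{M}\}$. For a positive integer $u$, $f_u$ is the unique integer $f$ with $2^{f}-f\le u<2^{f+1}-(f+1)$. *)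

From mathcomp Require Import all_boot all_order all_algebra.
Set Implicit Arguments. Unset Strict Implicit. Unset Printing Implicit Defensive.
Import GRing.Theory Num.Theory.

Section Families.
Variable n : nat.
Implicit Types (FF : {set {set 'I_n}}) (P A : {set 'I_n}) (x : 'I_n).

Definition hereditary FF :=
  forall A B : {set 'I_n}, B \in FF -> A \subset B -> A \in FF.

Definition degree FF x : nat := #|[set F in FF | x \in F]|.

Definition nbhd FF x : {set 'I_n} := \bigcup_(F in FF | x \in F) F.

Definition weight FF x : rat := \sum_(F in FF | x \in F) (#|F|%:R)^-1.

Definition good FF (d : nat) x := d.+1 <= #|nbhd FF x|.
Definition bad FF (d : nat) x := #|nbhd FF x| == d.

Definition is_pile FF (d : nat) P :=
  [/\ #|P| = d,
      (forall y, y \in P -> P \subset nbhd FF y) &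
      exists2 z, z \in P & nbhd FF z = P].

Definition isolated_pile FF d P :=
  is_pile FF d P /\
  forall Q, is_pile FF d Q -> Q != P -> [disjoint P & Q].

Definition pileG FF P : {set {set 'I_n}} := [set S in powerset P | S \in FF].
Definition pileM FF P : {set {set 'I_n}} := powerset P :\: pileG FF P.
Definition pileN FF P : {set {set 'I_n}} := [set P :\: M | M in pileM FF P].

End Families.

Definition is_f_of (u f : nat) : Prop :=
  (2 ^ f - f <= u) /\ (u < 2 ^ f.+1 - f.+1).

From mathcomp Require Import all_boot all_order all_algebra.
From mathcomp Require Import zify lra.
Import Order.TTheory GRing.Theory Num.Theory.
Set Implicit Arguments. Unset Strict Implicit. Unset Printing Implicit Defensive.

(* Write N = P :\: M0 with M0 a subset of P outside FF, and k = |N|.  As FF is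
   hereditary, the family M of subsets of P outside FF is closed upwards inside
   P, so it contains the 2^k supersets of M0.  The weight bound gives c <= |M|
   and bounds the weight carried by the members of FF leaving P; the degree
   bound says that a vertex y of P lies in at most c - 1 + (outer degree of y)
   members of M, and bad vertices have outer degree 0.  If a bad vertex lies in
   M0, the members of M through it include the supersets of M0 and the sets
   P :\ x for the other bad x in M0, so 2^k + #(bad vertices outside N) <= c.
   Otherwise 2^k <= d: if not, every complement P :\: S with S in M and every
   member of FF leaving P but meeting it has at most (d - 1)/3 elements, and
   summing the vertex bounds over M0 is contradictory.  Either way at most
   k + d - 2^k vertices of P are bad, so u >= 2^k - k, whence k <= f. *)

Lemma exp2_ge_cubic a : 17 <= a -> 24 * a * a.+1 <= 2 ^ a.
Proof.
elim: a => // a IH; rewrite leq_eqVlt => /orP [/eqP <- //|].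
rewrite ltnS expnS => a_ge; have := IH a_ge.
have : a.+2 <= 2 * a by lia.
move=> /(leq_mul (leqnn (24 * a.+1))); nia.
Qed.

Lemma mul3_lt_of_exp2_lt d a : 50 <= d -> 2 ^ a < 8 * d * a.+1 -> 3 * a < d.
Proof.
move=> d_ge exp_lt; case: (leqP 17 a) => [/exp2_ge_cubic|]; nia.
Qed.

Lemma exp2_subn_homo : {homo (fun a => 2 ^ a - a) : a b / a <= b}.
Proof.
move=> a b; elim: b => [|b IH]; first by rewrite leqn0 => /eqP ->.
rewrite leq_eqVlt => /orP [/eqP -> //|]; rewrite ltnS => /IH.
have : b < 2 ^ b by apply: ltn_expl.
rewrite expnS; lia.
Qed.

Lemma card_interval (T : finType) (A B : {set T}) : A \subset B ->
  #|[set S in powerset B | A \subset S]| = 2 ^ #|B :\: A|.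
Proof.
move=> AB.
have -> : [set S in powerset B | A \subset S] = [set A :|: X | X in powerset (B :\: A)].
  apply/setP => S; rewrite !inE; apply/idP/imsetP.
  - case/andP => SB AS; exists (S :\: A); first by rewrite inE setSD.
    apply/setP => x; rewrite !inE.
    by case: (boolP (x \in A)) => [/(subsetP AS) ->|].
  - case=> X; rewrite inE => XBA ->.
    by rewrite subsetUl andbT subUset AB (subset_trans XBA) ?subsetDl.
rewrite card_in_imset ?card_powerset // => X Y; rewrite !inE => XBA YBA eXY.
have remA (Z : {set T}) : Z \subset B :\: A -> (A :|: Z) :\: A = Z.
  move=> ZBA; apply/setP => x; rewrite !inE.
  case: (boolP (x \in Z)) => [/(subsetP ZBA)|]; last by rewrite orbF andNb.
  by rewrite inE orbT andbT => /andP [].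
by rewrite -(remA X) // eXY remA.
Qed.

Lemma card_imset_setD1 (T : finType) (A B : {set T}) :
  B \subset A -> #|[set A :\ x | x in B]| = #|B|.
Proof.
move=> BA; apply: card_in_imset => x y xB yB eAxy; apply/eqP/negPn/negP => xy.
have : x \in A :\ y by rewrite !inE xy (subsetP BA).
by rewrite -eAxy !inE eqxx.
Qed.

Lemma double_count (I J : finType) (A : {set I}) (B : {set J}) (R : I -> J -> bool) :
  \sum_(i in A) #|[set j in B | R i j]| = \sum_(j in B) #|[set i in A | R i j]|.
Proof.
have card_sum (K : finType) (C : {set K}) (p : pred K) :
    #|[set k in C | p k]| = \sum_(k in C) p k.
  rewrite -sum1_card (eq_bigl (fun k => (k \in C) && p k)) => [|k]; last by rewrite inE.
  by rewrite big_mkcondr /=; apply: eq_bigr => k _; case: (p k).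
under eq_bigr do rewrite card_sum.
under [RHS]eq_bigr do rewrite card_sum.
exact: exchange_big.
Qed.

Section OuterWeight.
Local Open Scope ring_scope.
Variables (n : nat) (FF : {set {set 'I_n}}) (P : {set 'I_n}).

Definition outer_weight : rat :=
  \sum_(F in FF | ~~ (F \subset P)) #|F :&: P|%:R / #|F|%:R.

Lemma outer_weight_ge0 : 0 <= outer_weight.
Proof. by apply: sumr_ge0 => F _; rewrite divr_ge0. Qed.

Lemma sum_weight_pile :
  \sum_(x in P) weight FF x = \sum_(F in FF) #|F :&: P|%:R / #|F|%:R.
Proof.
rewrite /weight; under eq_bigr do rewrite big_mkcondr.
rewrite exchange_big /=; apply: eq_bigr => F _; rewrite -big_mkcondr.
rewrite (eq_bigl (fun x => x \in F :&: P)); last by move=> x; rewrite inE andbC.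
by rewrite sumr_const mulr_natl.
Qed.

Lemma card_pileG_add_pileM : (#|pileG FF P| + #|pileM FF P| = 2 ^ #|P|)%N.
Proof.
have GP : pileG FF P \subset powerset P by apply/subsetP => S; rewrite inE => /andP [].
by rewrite -card_powerset -(cardsID (pileG FF P) (powerset P)) (setIidPr GP).
Qed.

(* The empty set, if in [FF], is the only member of [pileG FF P] contributing
   [0] (its term is [0 / 0]) rather than [1]. *)
Lemma sum_weight_pile_ge :
  #|pileG FF P|%:R - 1 + outer_weight <= \sum_(x in P) weight FF x.
Proof.
rewrite sum_weight_pile (bigID (fun F : {set 'I_n} => F \subset P)) /= lerD2r.
rewrite (bigID (fun F : {set 'I_n} => F != set0)) /=.
have -> : \sum_(F | (F \in FF) && (F \subset P) && (F != set0)) #|F :&: P|%:R / #|F|%:R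
          = #|pileG FF P :\ set0|%:R :> rat.
  rewrite -sum1_card natr_sum; apply: eq_big => F.
    by rewrite !inE; case: (F \in FF); case: (F \subset P); case: (F != set0).
  move=> /andP [/andP [_ FP] F0].
  by rewrite (setIidPl FP) divff // pnatr_eq0 cards_eq0.
have empty_ge0 : 0 <= \sum_(F | (F \in FF) && (F \subset P) && ~~ (F != set0))
                        (#|F :&: P|%:R / #|F|%:R : rat).
  by apply: sumr_ge0 => F _; rewrite divr_ge0.
have := cardsD1 set0 (pileG FF P).
by case: (set0 \in pileG FF P) => /= ->; rewrite ?natrD; lra.
Qed.

Lemma outer_weight_lt c : (c <= 2 ^ #|P|)%N ->
  \sum_(x in P) weight FF x < (2 ^ #|P| - c)%N%:R ->
  outer_weight + c%:R < #|pileM FF P|%:R + 1.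
Proof.
move=> c_le; rewrite natrB // -card_pileG_add_pileM natrD.
have := sum_weight_pile_ge; lra.
Qed.

Lemma c_le_card_pileM c :
  outer_weight + c%:R < #|pileM FF P|%:R + 1 -> (c <= #|pileM FF P|)%N.
Proof.
move=> lt_c; have w_ge0 := outer_weight_ge0.
have : c%:R < #|pileM FF P|%:R + 1 :> rat by lra.
by rewrite natr1 ltr_nat ltnS.
Qed.

End OuterWeight.

Section Pile.
Variables (n d c : nat) (FF : {set {set 'I_n}}) (P : {set 'I_n}).
Hypotheses (FF_hereditary : hereditary FF) (c_gt0 : 0 < c)
  (degree_ge : forall x, 2 ^ d.-1 - c + 1 <= degree FF x)
  (card_P : #|P| = d) (P_sub_nbhd : forall y, y \in P -> P \subset nbhd FF y).

Implicit Types (S T F : {set 'I_n}) (x y b : 'I_n).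
Local Notation M := (pileM FF P).

Definition pile_bad := [set x in P | ~~ good FF d x].
Definition mdegree y := #|[set S in M | y \in S]|.
Definition outer_degree y := #|[set F in FF | (y \in F) && ~~ (F \subset P)]|.

Lemma in_pileM S : (S \in M) = (S \subset P) && (S \notin FF).
Proof. by rewrite !inE; case: (S \subset P); case: (S \in FF). Qed.

Lemma pileM_sub S : S \in M -> S \subset P.
Proof. by rewrite in_pileM => /andP []. Qed.

Lemma pileM_up S T : S \in M -> S \subset T -> T \subset P -> T \in M.
Proof.
rewrite !in_pileM => /andP [_ SFF] ST TP; rewrite TP /=.
by apply: contra SFF => /FF_hereditary; apply.
Qed.

Lemma interval_sub_pileM S : S \in M -> [set T in powerset P | S \subset T] \subset M.
Proof.
move=> SM; apply/subsetP => T /setIdP [TP ST].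
by apply: pileM_up SM ST _; rewrite -powersetE.
Qed.

Lemma exp2_card_compl_le_pileM S : S \in M -> 2 ^ #|P :\: S| <= #|M|.
Proof.
move=> SM; rewrite -card_interval ?pileM_sub //.
exact/subset_leq_card/interval_sub_pileM.
Qed.

Lemma mdegree_add_avoid y : mdegree y + #|[set S in M | y \notin S]| = #|M|.
Proof.
rewrite -(cardID (fun S => y \in S) M).
by congr (_ + _); apply: eq_card => S; rewrite !inE andbC.
Qed.

Lemma mdegree_le y : y \in P -> mdegree y <= c - 1 + outer_degree y.
Proof.
move=> yP; set inner := [set F in FF | (y \in F) && (F \subset P)].
have inner_add_mdegree : #|inner| + mdegree y = 2 ^ d.-1.
  have <- : #|[set S in powerset P | [set y] \subset S]| = 2 ^ d.-1.
    by rewrite card_interval ?sub1set // -card_P (cardsD1 y P) yP.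
  rewrite /mdegree -(cardsID FF [set S in powerset P | _]).
  congr (_ + _); apply: eq_card => F; rewrite !inE sub1set;
    by case: (F \in FF); case: (y \in F); case: (F \subset P).
have inner_add_outer : #|inner| + outer_degree y = degree FF y.
  rewrite /degree /outer_degree.
  rewrite -(cardsID [set F : {set 'I_n} | F \subset P] [set F in FF | y \in F]).
  congr (_ + _); apply: eq_card => F; rewrite !inE;
    by case: (F \in FF); case: (y \in F); case: (F \subset P).
have := degree_ge y; lia.
Qed.

Lemma nbhd_bad y : y \in pile_bad -> nbhd FF y = P.
Proof.
rewrite inE /good -ltnNge ltnS => /andP [yP card_le].
by apply/esym/eqP; rewrite eqEcard P_sub_nbhd // card_P.
Qed.

Lemma outer_degree_bad y : y \in pile_bad -> outer_degree y = 0.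
Proof.
move=> yB; apply/eqP; rewrite cards_eq0; apply/eqP/setP => F; rewrite !inE.
apply/negP => /and3P [FFF yF]; rewrite -(nbhd_bad yB); apply/negP/negPn.
by apply: (bigcup_sup F); rewrite FFF yF.
Qed.

Lemma mdegree_bad y : y \in pile_bad -> mdegree y <= c - 1.
Proof.
move=> yB; have := mdegree_le (y := y); rewrite outer_degree_bad // addn0.
by apply; move: yB; rewrite inE => /andP [].
Qed.

Lemma setD1_in_pileM b : b \in pile_bad -> c <= #|M| -> P :\ b \in M.
Proof.
move=> bB c_le.
have : 0 < #|[set S in M | b \notin S]|.
  by have := mdegree_add_avoid b; have := mdegree_bad bB; lia.
case/card_gt0P => S /setIdP [SM bS].
apply: (pileM_up SM _ (subD1set P b)); apply/subsetP => x xS.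
by rewrite !inE (subsetP (pileM_sub SM)) // andbT; apply: contraNneq bS => <-.
Qed.

Lemma card_pileM_le_bad z : z \in pile_bad -> #|M| <= 2 * (c - 1).
Proof.
move=> zB; have zP : z \in P by move: zB; rewrite inE => /andP [].
have avoid_le : #|[set S in M | z \notin S]| <= mdegree z.
  rewrite -(card_in_imset (f := fun S => z |: S)) => [|S1 S2]; last first.
    by rewrite !inE => /andP [_ zS1] /andP [_ zS2] eS; rewrite -(setU1K zS1) eS setU1K.
  apply/subset_leq_card/subsetP => _ /imsetP [S /setIdP [SM zS] ->].
  rewrite inE setU11 andbT; apply: (pileM_up SM (subsetUr _ _)).
  by rewrite subUset sub1set zP pileM_sub.
have mdegree_z := mdegree_bad zB.
by rewrite -(mdegree_add_avoid z) mul2n -addnn leq_add // (leq_trans avoid_le).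
Qed.

Lemma exp2_add_bad_outside_le M0 b :
  M0 \in M -> b \in pile_bad :\: (P :\: M0) -> c <= #|M| ->
  2 ^ #|P :\: M0| + #|pile_bad :\: (P :\: M0)| <= c.
Proof.
move=> M0M bB' c_le; have /setDP [bB _] := bB'.
set B := pile_bad :\: (P :\: M0).
set up := [set T in powerset P | M0 \subset T].
set coatoms := [set P :\ x | x in B :\ b].
have B_sub_P : B \subset P by apply/subsetP => x /setDP [/setIdP []].
have B_sub_M0 : B \subset M0.
  by apply/subsetP => x /setDP [/setIdP [xP _]]; rewrite inE xP andbT negbK.
have disj : up :&: coatoms = set0.
  apply/setP => S; rewrite inE in_set0.
  apply/andP => -[/setIdP [_ M0S] /imsetP [x /setD1P [_ xB] eS]].
  by have := subsetP M0S x (subsetP B_sub_M0 x xB); rewrite eS !inE eqxx.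
have up_coatoms_le : #|up :|: coatoms| <= mdegree b.
  apply/subset_leq_card/subsetP => S.
  case/setUP => [SU | /imsetP [x /setD1P [xb xB] ->]]; rewrite inE.
    rewrite (subsetP (interval_sub_pileM M0M)) //.
    by move: SU => /setIdP [_ /subsetP]; apply; apply: (subsetP B_sub_M0).
  rewrite setD1_in_pileM //; last by move: xB => /setDP [].
  by rewrite !inE eq_sym xb (subsetP B_sub_P).
move: up_coatoms_le; rewrite cardsU disj cards0 subn0.
rewrite card_interval ?pileM_sub // card_imset_setD1; last first.
  exact: subset_trans (subD1set _ _) B_sub_P.
move=> /leq_trans /(_ (mdegree_bad bB)).
by rewrite (cardsD1 b B) bB' add1n addnS subn1 -ltnS prednK.
Qed.

Lemma card_pile_bad_add_good : #|pile_bad| + #|[set x in P | good FF d x]| = d.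
Proof.
rewrite -[X in _ = X]card_P -(cardID (good FF d) P) addnC.
by congr (_ + _); apply: eq_card => x; rewrite !inE andbC.
Qed.

Lemma outer_weight_ge F y w : F \in FF -> y \in F :&: P -> w \in F :\: P ->
  ((2 ^ (#|F| - 2))%:R / #|F|%:R <= outer_weight FF P :> rat)%R.
Proof.
move=> FFF /setIP [yF yP] /setDP [wF wP].
have yw_sub : [set y; w] \subset F by rewrite subUset !sub1set yF wF.
set up := [set S in powerset F | [set y; w] \subset S].
have card_up : #|up| = 2 ^ (#|F| - 2).
  have yw : y != w by apply: contraNneq wP => <-.
  by rewrite card_interval // cardsD (setIidPr yw_sub) cards2 yw.
set outer := [set S in FF | ~~ (S \subset P)].
have up_sub_outer : up \subset outer.
  apply/subsetP => S /setIdP [SF ywS]; rewrite powersetE in SF.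
  rewrite inE (FF_hereditary FFF SF) /=; apply/subsetPn; exists w => //.
  by rewrite (subsetP ywS) // !inE eqxx orbT.
have term_ge S : S \in up -> (#|F|%:R^-1 <= #|S :&: P|%:R / #|S|%:R :> rat)%R.
  move=> /setIdP [SF ywS].
  have SP_gt0 : 0 < #|S :&: P|.
    by apply/card_gt0P; exists y; rewrite !inE yP (subsetP ywS) ?set21.
  have S_gt0 : 0 < #|S| by apply: leq_trans SP_gt0 (subset_leq_card (subsetIl _ _)).
  have S_le : #|S| <= #|F| by rewrite subset_leq_card // -powersetE.
  rewrite ler_pdivlMr ?ltr0n // mulrC ler_pdivrMr ?ltr0n ?(leq_trans S_gt0) //.
  by rewrite -natrM ler_nat (leq_trans S_le) // leq_pmull.
have -> : outer_weight FF P = (\sum_(S in outer) #|S :&: P|%:R / #|S|%:R)%R.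
  by apply: eq_bigl => S; rewrite inE.
rewrite (big_setID up) /= (setIidPr up_sub_outer) -card_up -sumr_const.
apply: ler_wpDr; first by apply: sumr_ge0 => S _; rewrite divr_ge0.
rewrite mulr_suml; apply: ler_sum => S Sup; rewrite mul1r; exact: term_ge.
Qed.

Section WeightBound.
Hypotheses (d_ge : 50 <= d) (c_le_d : c <= d)
  (outer_lt : (outer_weight FF P + c%:R < #|M|%:R + 1)%R)
  (card_pileM_le : #|M| <= 2 * d).

(* Every set size [a] met below satisfies [2 ^ a < 8 * d * a.+1], hence [3 * a < d]. *)
Let K := d.-1 %/ 3.

Lemma le_K a : 2 ^ a < 8 * d * a.+1 -> a <= K.
Proof. by move=> /(mul3_lt_of_exp2_lt d_ge); rewrite /K; lia. Qed.

Lemma card_compl_pileM_le S : S \in M -> #|P :\: S| <= K.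
Proof.
move=> /exp2_card_compl_le_pileM exp2_le; apply: le_K.
have : 8 * d <= 8 * d * #|P :\: S|.+1 by apply: leq_pmulr.
lia.
Qed.

Lemma card_outer_le F : F \in FF -> ~~ (F \subset P) -> F :&: P != set0 -> #|F| <= K.
Proof.
move=> FFF /subsetPn [w wF wP] /set0Pn [y yFP].
have wFP : w \in F :\: P by rewrite inE wP wF.
have F_ge2 : 2 <= #|F|.
  have yw : y != w by apply: contraNneq wP => <-; move: yFP => /setIP [].
  have : [set y; w] \subset F by rewrite subUset !sub1set wF; move: yFP => /setIP [->].
  by move=> /subset_leq_card; rewrite cards2 yw.
have exp2_lt : ((2 ^ (#|F| - 2))%:R / #|F|%:R < (2 * d)%:R :> rat)%R.
  have := outer_weight_ge FFF yFP wFP.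
  have : (#|M|%:R <= (2 * d)%:R :> rat)%R by rewrite ler_nat.
  have : (1 <= c%:R :> rat)%R by rewrite ler1n.
  have := outer_lt; move: (_ / _)%R => t; lra.
rewrite ltr_pdivrMr ?ltr0n ?(leq_trans _ F_ge2) // -natrM ltr_nat in exp2_lt.
apply: le_K; move: #|F| exp2_lt F_ge2 => [|[|a]] // exp2_lt _.
rewrite subSS subSS subn0 in exp2_lt; rewrite !expnS; nia.
Qed.

Lemma sum_outer_degree_le :
  ((\sum_(y in P) outer_degree y)%:R <= K%:R * outer_weight FF P :> rat)%R.
Proof.
rewrite /outer_degree (double_count P FF (fun y F => (y \in F) && ~~ (F \subset P))).
rewrite natr_sum mulr_sumr (bigID (fun F : {set 'I_n} => F \subset P)) /=.
rewrite big1 ?add0r => [|F /andP [_ FP]]; last first.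
  by apply/eqP; rewrite pnatr_eq0 cards_eq0; apply/eqP/setP => x; rewrite !inE FP !andbF.
apply: ler_sum => F /andP [FFF FP].
have -> : [set x in P | (x \in F) && ~~ (F \subset P)] = F :&: P.
  by apply/setP => x; rewrite !inE FP andbT andbC.
have [->|FP0] := eqVneq (F :&: P) set0; first by rewrite cards0 mulr_ge0 ?divr_ge0.
have F_le := card_outer_le FFF FP FP0.
have F_gt0 : 0 < #|F|.
  by case/set0Pn: FP0 => x /setIP [xF _]; apply/card_gt0P; exists x.
rewrite mulrCA ler_peMr ?ler0n //.
by rewrite ler_pdivlMr ?ltr0n // mul1r ler_nat.
Qed.

Lemma sum_outer_degree_le_nat (A : {set 'I_n}) :
  A \subset P -> \sum_(y in A) outer_degree y <= K * (#|M| - c + 1).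
Proof.
move=> AP; apply: (@leq_trans (\sum_(y in P) outer_degree y)).
  by rewrite [X in _ <= X](big_setID A) /= (setIidPr AP) leq_addr.
rewrite -(ler_nat rat) natrM; apply: le_trans sum_outer_degree_le _.
rewrite ler_wpM2l // natrD natrB ?(c_le_card_pileM outer_lt) //.
by have := outer_lt; lra.
Qed.

Section Complement.
Variable M0 : {set 'I_n}.
Hypothesis M0_in : M0 \in M.

Let R := [set S in M | ~~ (M0 \subset S)].
Let avoiders y := [set S in R | y \notin S].

Lemma exp2_add_card_R_le : 2 ^ #|P :\: M0| + #|R| <= #|M|.
Proof.
set up := [set T in powerset P | M0 \subset T].
have disj : up :&: R = set0.
  by apply/setP => S; rewrite !inE; case: (M0 \subset S); rewrite ?andbF.
have sub : up :|: R \subset M.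
  by rewrite subUset interval_sub_pileM //=; apply/subsetP => S /setIdP [].
by move: (subset_leq_card sub); rewrite cardsU disj cards0 subn0 card_interval ?pileM_sub.
Qed.

Lemma card_pileM_le_vertex y : y \in M0 ->
  #|M| <= c - 1 + outer_degree y + #|avoiders y|.
Proof.
move=> yM0; rewrite -(mdegree_add_avoid y).
apply: leq_add; first exact: (mdegree_le (subsetP (pileM_sub M0_in) y yM0)).
apply/subset_leq_card/subsetP => S /setIdP [SM yS].
apply/setIdP; split => //; apply/setIdP; split => //.
by apply: contra yS => /subsetP; apply.
Qed.

Lemma sum_avoiders_le : \sum_(y in M0) #|avoiders y| <= #|R| * K.
Proof.
rewrite /avoiders (double_count M0 R (fun y S => y \notin S)) -sum_nat_const.
apply: leq_sum => S /setIdP [SM _].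
apply: leq_trans (card_compl_pileM_le SM); apply/subset_leq_card/subsetP => x.
by rewrite !inE => /andP [xM0 ->]; rewrite (subsetP (pileM_sub M0_in)).
Qed.

Lemma exp2_card_compl_le : 2 ^ #|P :\: M0| <= d.
Proof.
rewrite leqNgt; apply/negP => d_lt.
have c_le := c_le_card_pileM outer_lt.
set s := #|M| - c + 1.
have R_lt : #|R| < s by have := exp2_add_card_R_le; rewrite /s; lia.
have M0_gt : 2 * K < #|M0|.
  have := cardsID M0 P; rewrite (setIidPr (pileM_sub M0_in)) card_P.
  by have := card_compl_pileM_le M0_in; rewrite /K; lia.
have vertex_sum : #|M0| * s <=
    \sum_(y in M0) outer_degree y + \sum_(y in M0) #|avoiders y|.
  rewrite -big_split -sum_nat_const /=; apply: leq_sum => y yM0.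
  have := card_pileM_le_vertex yM0; rewrite /s.
  by move: (outer_degree y) #|avoiders y| => o a; lia.
(* With |R| < s: (2K + 1) s <= |M0| s <= K s + K (s - 1). *)
have := sum_outer_degree_le_nat (pileM_sub M0_in); have := sum_avoiders_le.
nia.
Qed.

End Complement.

Lemma card_bad_outside_add_exp2_le M0 : M0 \in M ->
  #|pile_bad :\: (P :\: M0)| + 2 ^ #|P :\: M0| <= d.
Proof.
move=> M0M; have [->|[b bB]] := set_0Vmem (pile_bad :\: (P :\: M0)).
  by rewrite cards0 exp2_card_compl_le.
rewrite addnC (leq_trans _ c_le_d) // (exp2_add_bad_outside_le M0M bB) //.
exact: c_le_card_pileM outer_lt.
Qed.

Lemma exp2_subn_card_compl_le_good M0 : M0 \in M ->
  2 ^ #|P :\: M0| - #|P :\: M0| <= #|[set x in P | good FF d x]|.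
Proof.
move=> M0M; have := card_bad_outside_add_exp2_le M0M.
have := cardsID (P :\: M0) pile_bad; have := card_pile_bad_add_good.
have : #|pile_bad :&: (P :\: M0)| <= #|P :\: M0| by apply/subset_leq_card/subsetIr.
lia.
Qed.

End WeightBound.

End Pile.

Theorem mainTheorem18 (n d c : nat) (FF : {set {set 'I_n}}) (P : {set 'I_n}) :
  50 <= d -> 1 <= c <= d ->
  hereditary FF ->
  (forall x : 'I_n, 2 ^ d.-1 - c + 1 <= degree FF x) ->
  isolated_pile FF d P ->
  (\sum_(x in P) weight FF x < ((2 ^ d - c)%N)%:R)%R ->
  let u := #|[set x in P | good FF d x]| in
  1 <= u ->
  forall f : nat, is_f_of u f ->
  forall N, N \in pileN FF P -> #|N| <= f.
Proof.
move=> d_ge /andP [c_gt0 c_le_d] hered degree_ge [[card_P P_sub_nbhd [z zP nbhd_z]] _].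
move=> weight_lt u _ f [_ u_lt] _ /imsetP [M0 M0M ->].
have c_le_exp2 : c <= 2 ^ #|P| by rewrite card_P (leq_trans c_le_d) // ltnW // ltn_expl.
move: weight_lt; rewrite -card_P => /(outer_weight_lt c_le_exp2) outer_lt.
have z_bad : z \in pile_bad d FF P by rewrite inE zP /good nbhd_z card_P ltnn.
have card_pileM_le : #|pileM FF P| <= 2 * d.
  apply: leq_trans (card_pileM_le_bad hered c_gt0 degree_ge card_P P_sub_nbhd z_bad) _.
  by rewrite leq_mul2l (leq_trans (leq_subr 1 c)).
have key := exp2_subn_card_compl_le_good hered c_gt0 degree_ge card_P P_sub_nbhd d_ge
  c_le_d outer_lt card_pileM_le M0M.
rewrite leqNgt; apply/negP => /exp2_subn_homo exp2_le.
by move: (leq_trans u_lt exp2_le); rewrite ltnNge key.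
Qed.
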